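(* For every $n\ge 2$ and every Greene–Kleitman chain $C$ in $Q_n$ with $|C|\ge 2$, the chains $C$ and $f(C)$ are connected both at their top ends and at their bottom ends in $Q_n$, and likewise the chains $C$ and $\ell(C)$ are connected both at their top ends and at their bottom ends in $Q_n$.
   Context: $Q_n$ is the hypercube on $\{0,1\}^n$. Let $D$ be the set of bitstrings (including the empty string) with equally many $0$s and $1$s such that every prefix has at least as many $0$s as $1$s. A Greene–Kleitman chain is a string of length $n$ over $\{0,1,*\}$ of the form $u_0*u_1*\cdots*u_{h-1}*u_h$ with all $u_j\in D$, representing the path whose vertices are obtained by replacing the $*$s by $i$ ones followed by $h-i$ zeros, $i=0,\ldots,h$; $|C|=h$ is its number of $*$s. Its bottom end $b(C)$ is obtained by replacing all $*$s by $0$, its top end $t(C)$ by replacing all $*$s by $1$. For a string $C$ over $\{0,1,*\}$ with at least two $*$s, $f(C)$ (resp. $\ell(C)$) is obtained by replacing the first two (resp. last two) $*$s by $0$ and $1$, respectively. Two chains $C,C'$ are connected at their bottom ends (resp. top ends) if $b(C)$ and $b(C')$ (resp. $t(C)$ and $t(C')$) differ in exactly one position. *)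

(* Bits are bools (false = 0, true = 1); a string over
   {0,1,*} is a seq (option bool) with None = '*'. *)
From mathcomp Require Import all_boot.
Set Implicit Arguments. Unset Strict Implicit. Unset Printing Implicit Defensive.

Definition isD (u : seq bool) : bool :=
  (count (fun b => ~~ b) u == count id u) &&
  all (fun k => count id (take k u) <= count (fun b => ~~ b) (take k u))
      (iota 0 (size u).+1).

Fixpoint split_stars (s : seq (option bool)) : seq (seq bool) :=
  match s with
  | [::] => [:: [::]]
  | None :: s' => [::] :: split_stars s'
  | Some b :: s' =>
      match split_stars s' with
      | [::] => [:: [:: b]]
      | u :: us => (b :: u) :: us
      end
  end.

Definition GKchain (n : nat) (C : seq (option bool)) : Prop :=
  size C = n /\ all isD (split_stars C).

Definition nstars (C : seq (option bool)) : nat := count (pred1 None) C.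

Definition bot (C : seq (option bool)) : seq bool := map (fun o => odflt false o) C.
Definition top (C : seq (option bool)) : seq bool := map (fun o => odflt true o) C.

Fixpoint rep1 (b : bool) (s : seq (option bool)) : seq (option bool) :=
  match s with
  | [::] => [::]
  | None :: s' => Some b :: s'
  | o :: s' => o :: rep1 b s'
  end.

Definition fC (C : seq (option bool)) : seq (option bool) := rep1 true (rep1 false C).
Definition lC (C : seq (option bool)) : seq (option bool) :=
  rev (rep1 false (rep1 true (rev C))).

Definition differ_in_one (x y : seq bool) : Prop :=
  size x = size y /\ count id [seq p.1 != p.2 | p <- zip x y] = 1.

Definition connected_bot (C C' : seq (option bool)) : Prop := differ_in_one (bot C) (bot C').
Definition connected_top (C C' : seq (option bool)) : Prop := differ_in_one (top C) (top C').

From mathcomp Require Import all_boot.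

(* Replacing the first star of a string by the bit b does not change the end
   [map (odflt b)], while replacing it by ~~ b changes that end in exactly one
   position.  Hence, however 0 and 1 are assigned to the first two stars, each
   end of C changes in exactly one position when passing to f(C); l(C) is the
   same kind of operation on the reversed string.  Only the two stars of C are used, not the
   Greene–Kleitman structure. *)

Lemma size_rep1 b s : size (rep1 b s) = size s.
Proof. by elim: s => [|[c|] s IH] //=; rewrite IH. Qed.

Lemma nstars_rep1 b s : nstars (rep1 b s) = (nstars s).-1.
Proof. by rewrite /nstars; elim: s => [|[c|] s IH]. Qed.

Lemma nstars_rev s : nstars (rev s) = nstars s.
Proof. exact: count_rev. Qed.

Lemma end_rep1 b s : map (odflt b) (rep1 b s) = map (odflt b) s.
Proof. by elim: s => [|[c|] s IH] //=; rewrite IH. Qed.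

Lemma count_neq_zip_diag (x : seq bool) :
  count id [seq p.1 != p.2 | p <- zip x x] = 0.
Proof. by elim: x => //= a x ->; rewrite eqxx. Qed.

Lemma differ_in_one_rev x y :
  differ_in_one (rev x) (rev y) <-> differ_in_one x y.
Proof.
rewrite /differ_in_one !size_rev.
by split=> -[eq_size]; rewrite -rev_zip // map_rev count_rev.
Qed.

Lemma differ_in_one_end_rep1 b s : 0 < nstars s ->
  differ_in_one (map (odflt b) s) (map (odflt b) (rep1 (~~ b) s)).
Proof.
rewrite /differ_in_one !size_map size_rep1 /nstars => has_star; split=> //.
elim: s has_star => [|[c|] s IH] //= has_star; first by rewrite eqxx IH.
by rewrite count_neq_zip_diag; case: (b).
Qed.

Lemma differ_in_one_end_rep1_rep1 b c d s : 1 < nstars s -> c != d ->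
  differ_in_one (map (odflt b) s) (map (odflt b) (rep1 d (rep1 c s))).
Proof.
move=> two_stars neq_cd.
have {neq_cd} -> : d = ~~ c by case: c d neq_cd => [] [].
have [-> | /negbTE neq_cb] := eqVneq c b.
  rewrite -{1}(end_rep1 b s); apply: differ_in_one_end_rep1.
  by rewrite nstars_rep1 ltn_predRL.
have -> : c = ~~ b by case: b c neq_cb => [] [].
by rewrite negbK end_rep1; apply: differ_in_one_end_rep1; apply: ltnW.
Qed.

Theorem lemma18 (n : nat) (C : seq (option bool)) :
  2 <= n -> GKchain n C -> 2 <= nstars C ->
  (connected_top C (fC C) /\ connected_bot C (fC C)) /\
  (connected_top C (lC C) /\ connected_bot C (lC C)).
Proof.
move=> _ _ two_stars.
have two_stars_rev : 1 < nstars (rev C) by rewrite nstars_rev.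
rewrite /connected_top /connected_bot /fC /lC /top /bot.
split.
  by split; apply: differ_in_one_end_rep1_rep1.
by split; apply/differ_in_one_rev; rewrite -!map_rev revK;
  apply: differ_in_one_end_rep1_rep1.
Qed.
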